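(* Let PS1 and PS2 be two pure strategies (as in the context) with $m_{PS1}(X)$ finite for every $X\in\mathcal{S}$. Then PS2 is complementary to PS1 (i.e. there exists $X\in\mathcal{S}_{\mathrm{non}}$ with $\Delta_{PS1}(X)<\Delta_{PS2}(X)$) if and only if there exists a mixed strategy MS derived from PS1 and PS2 whose average expected hitting time is strictly less than that of PS1, i.e. $\bar m_{MS}<\bar m_{PS1}$, where $\bar m=\frac{1}{|\mathcal{S}|}\sum_{X\in\mathcal{S}}m(X)$.
   Context: A fitness function $f$ on a finite set is to be maximised. A metaheuristic generates populations $\Phi_0,\Phi_1,\dots$. Let $\mathcal{S}$ be the finite set of all populations, $\mathcal{S}_{\mathrm{opt}}$ those containing at least one optimal solution, $\mathcal{S}_{\mathrm{non}}=\mathcal{S}\setminus\mathcal{S}_{\mathrm{opt}}$. The sequence is a time-homogeneous Markov chain on $\mathcal{S}$ with transition probabilities $P(X,Y)=\Pr(\Phi_{t+1}=Y\mid\Phi_t=X)$, every state of $\mathcal{S}_{\mathrm{opt}}$ absorbing. The expected hitting time $m(X)\in[0,\infty]$ is the expected number of generations until first entering $\mathcal{S}_{\mathrm{opt}}$ from $\Phi_0=X$ ($m(X)=0$ on $\mathcal{S}_{\mathrm{opt}}$). A pure strategy is such a time-independent transition matrix. PS1, PS2 are pure strategies with transition matrices $P_1,P_2$ on the same $\mathcal{S}$ (with $\mathcal{S}_{\mathrm{opt}}$ absorbing), expected hitting times $m_{PS1},m_{PS2}$. A mixed strategy MS derived from PS1 and PS2 assigns to each $X\in\mathcal{S}$ probabilities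 $P_X(PS1)\in[0,1]$, $P_X(PS2)=1-P_X(PS1)$, and has transition matrix $P_{MS}(X,Y)=P_X(PS1)P_1(X,Y)+P_X(PS2)P_2(X,Y)$, with expected hitting time $m_{MS}$. With $d(X)=m_{PS1}(X)$, for $X\in\mathcal{S}_{\mathrm{non}}$: $\Delta_{PS1}(X)=d(X)-\sum_{Y\in\mathcal{S}_{\mathrm{non}}}P_1(X,Y)d(Y)$, $\Delta_{PS2}(X)=d(X)-\sum_{Y\in\mathcal{S}_{\mathrm{non}}}P_2(X,Y)d(Y)$. *)

From HB Require Import structures.
From mathcomp Require Import all_boot all_order all_algebra.
From mathcomp Require Import all_classical all_reals all_analysis.

Set Implicit Arguments.
Unset Strict Implicit.
Unset Printing Implicit Defensive.

Import Order.TTheory GRing.Theory Num.Theory.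
Local Open Scope ring_scope.

Definition stochastic (R : realType) (S : finType) (P : S -> S -> R) : Prop :=
  (forall X Y, 0 <= P X Y) /\ (forall X, \sum_(Y : S) P X Y = 1).

Definition pure_strategy (R : realType) (S : finType) (opt : {set S})
    (P : S -> S -> R) : Prop :=
  stochastic P /\ (forall X, X \in opt -> P X X = 1).

(* surv P opt t X = Pr(Phi_0, ..., Phi_t are all in S_non | Phi_0 = X)
                  = Pr(T > t | Phi_0 = X), T the first hitting time of S_opt. *)
Fixpoint surv (R : realType) (S : finType) (opt : {set S})
    (P : S -> S -> R) (t : nat) (X : S) : R :=
  match t with
  | 0 => if X \in opt then 0 else 1
  | t'.+1 => if X \in opt then 0
             else \sum_(Y : S | Y \notin opt) P X Y * surv opt P t' Y
  end.

(* Expected hitting time m(X) = E[T | Phi_0 = X] in [0, +oo], computed by the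
   tail-sum formula E[T] = \sum_{t >= 0} Pr(T > t). It is 0 on S_opt. *)
Definition hitting_time (R : realType) (S : finType) (opt : {set S})
    (P : S -> S -> R) (X : S) : \bar R :=
  (\sum_(0 <= t <oo) (surv opt P t X)%:E)%E.

Definition avg_hitting_time (R : realType) (S : finType) (opt : {set S})
    (P : S -> S -> R) : \bar R :=
  (((#|S|%:R)^-1)%:E * \sum_(X : S) hitting_time opt P X)%E.

(* Transition matrix of the mixed strategy with P_X(PS1) = q X. *)
Definition mixed_matrix (R : realType) (S : finType)
    (q : S -> R) (P1 P2 : S -> S -> R) : S -> S -> R :=
  fun X Y => q X * P1 X Y + (1 - q X) * P2 X Y.

(* Delta_PS(X) = d(X) - \sum_{Y in S_non} P(X,Y) d(Y), with d = m_PS1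
   (assumed finite, so taken as a real number via [fine]). *)
Definition Delta (R : realType) (S : finType) (opt : {set S})
    (P1 P : S -> S -> R) (X : S) : R :=
  let d := fun Z => fine (hitting_time opt P1 Z) in
  d X - \sum_(Y : S | Y \notin opt) P X Y * d Y.

Definition complementary (R : realType) (S : finType) (opt : {set S})
    (P1 P2 : S -> S -> R) : Prop :=
  exists X, X \notin opt /\ Delta opt P1 P1 X < Delta opt P1 P2 X.

(* Write d := m_PS1.  Conditioning on the first step gives
   d X = 1 + \sum_{Y non-optimal} P1(X,Y) d(Y), i.e. Delta_PS1 = 1 on S_non, and
   expected hitting times obey a comparison principle: a nonnegative
   supersolution of the first-step equation of a chain bounds its hitting time
   from above, a nonnegative subsolution from below.  If Delta_PS2(X0) > 1, the
   mixed strategy playing PS2 at X0 only admits d lowered at X0 as a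
   supersolution, so its average hitting time is smaller.  If Delta_PS2 <= 1
   everywhere, d is a subsolution for every mixed strategy, whose average
   hitting time is therefore at least that of PS1. *)
From HB Require Import structures.
From mathcomp Require Import all_boot all_order all_algebra.
From mathcomp Require Import all_classical all_reals all_analysis.
From mathcomp Require Import lra.
Import Order.TTheory GRing.Theory Num.Theory.
Local Open Scope ring_scope.
Local Open Scope classical_set_scope.
Import numFieldNormedType.Exports.

Set Implicit Arguments.
Unset Strict Implicit.
Unset Printing Implicit Defensive.

Definition hitting_time_trunc (R : realType) (S : finType) (opt : {set S})
    (P : S -> S -> R) (n : nat) (X : S) : R :=
  \sum_(0 <= t < n) surv opt P t X.

Section HittingTime.
Variables (R : realType) (S : finType) (opt : {set S}) (P : S -> S -> R).
Hypothesis P_ge0 : forall X Y, 0 <= P X Y.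

Local Notation trunc := (hitting_time_trunc opt P).
Local Notation ht := (hitting_time opt P).

Lemma surv_ge0 t X : 0 <= surv opt P t X.
Proof.
elim: t X => [|t IHt] X /=; first by case: ifP.
by case: ifP => // _; apply: sumr_ge0 => Y _; apply: mulr_ge0.
Qed.

Lemma hitting_time_trunc_opt n X : X \in opt -> trunc n X = 0.
Proof. by move=> Xo; apply: big1 => -[|t] _ /=; rewrite Xo. Qed.

Lemma hitting_time_truncS n X : X \notin opt ->
  trunc n.+1 X = 1 + \sum_(Y | Y \notin opt) P X Y * trunc n Y.
Proof.
move=> Xn; rewrite /hitting_time_trunc big_nat_recl //= (negbTE Xn).
by congr (_ + _); rewrite exchange_big /=; apply: eq_bigr => Y _; rewrite mulr_sumr.
Qed.

Lemma hitting_time_ge_trunc n X : ((trunc n X)%:E <= ht X)%E.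
Proof.
rewrite /hitting_time_trunc -sumEFin.
by apply: nneseries_lim_ge => t _ _; rewrite lee_fin surv_ge0.
Qed.

Lemma hitting_time_ge0 X : (0 <= ht X)%E.
Proof. by have := hitting_time_ge_trunc 0 X; rewrite /hitting_time_trunc big_geq. Qed.

Lemma hitting_time_le X c : (forall n, trunc n X <= c) -> (ht X <= c%:E)%E.
Proof.
move=> trunc_le; rewrite /hitting_time; apply: lime_le.
  by apply: is_cvg_nneseries => t _ _; rewrite lee_fin surv_ge0.
by apply: nearW => n; rewrite sumEFin lee_fin; apply: trunc_le.
Qed.

Lemma hitting_time_opt X : X \in opt -> ht X = 0%E.
Proof.
move=> Xo; apply/eqP; rewrite eq_le hitting_time_ge0 andbT.
by apply: hitting_time_le => n; rewrite hitting_time_trunc_opt.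
Qed.

Lemma cvg_hitting_time_trunc X : ht X \is a fin_num ->
  trunc n X @[n --> \oo] --> fine (ht X).
Proof.
move=> htX; have : (\sum_(0 <= t < n) (surv opt P t X)%:E)%E @[n --> \oo] --> ht X.
  by apply: is_cvg_nneseries => t _ _; rewrite lee_fin surv_ge0.
rewrite -(fineK htX) => /fine_cvgP[_]; apply: cvg_trans.
by apply: near_eq_cvg; apply: nearW => n /=; rewrite sumEFin.
Qed.

Lemma hitting_time_first_step : (forall X, ht X \is a fin_num) ->
  forall X, X \notin opt ->
  fine (ht X) = 1 + \sum_(Y | Y \notin opt) P X Y * fine (ht Y).
Proof.
move=> ht_fin X Xn; have trunc_lim := cvg_hitting_time_trunc (ht_fin X).
rewrite -cvg_shiftS /= in trunc_lim.
have rhs_lim : 1 + \sum_(Y | Y \notin opt) P X Y * trunc n Y @[n --> \oo] -->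
    1 + \sum_(Y | Y \notin opt) P X Y * fine (ht Y).
  apply: cvgD; first exact: cvg_cst.
  apply: cvg_big => //; first exact: add_continuous.
  by move=> Y _; apply: cvgMl_tmp; apply: cvg_hitting_time_trunc.
have step_lim : trunc n.+1 X @[n --> \oo] -->
    1 + \sum_(Y | Y \notin opt) P X Y * fine (ht Y).
  apply: cvg_trans rhs_lim.
  by apply: near_eq_cvg; apply: nearW => n /=; rewrite hitting_time_truncS.
exact: (cvg_unique _ trunc_lim step_lim).
Qed.

Lemma hitting_time_le_supersolution (d : S -> R) :
  (forall X, 0 <= d X) ->
  (forall X, X \notin opt -> 1 + \sum_(Y | Y \notin opt) P X Y * d Y <= d X) ->
  forall X, (ht X <= (d X)%:E)%E.
Proof.
move=> d_ge0 d_super X; apply: hitting_time_le => n; elim: n X => [|n IHn] X.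
  by rewrite /hitting_time_trunc big_geq.
have [Xo|Xn] := boolP (X \in opt); first by rewrite hitting_time_trunc_opt.
rewrite hitting_time_truncS //; apply: le_trans (d_super X Xn).
by rewrite lerD2l; apply: ler_sum => Y _; apply: ler_wpM2l.
Qed.

Lemma hitting_time_ge_subsolution (d : S -> R) :
  (forall X, 0 <= d X) ->
  (forall X, X \notin opt -> d X <= 1 + \sum_(Y | Y \notin opt) P X Y * d Y) ->
  forall X, X \notin opt -> ((d X)%:E <= ht X)%E.
Proof.
move=> d_ge0 d_sub; set C := \sum_Y d Y.
have d_leC Y : d Y <= C by rewrite /C (bigD1 Y) //= lerDl sumr_ge0.
(* unrolling the subsolution inequality n times, the mass still alive is
   charged at most C *)
have d_le n X : X \notin opt -> d X <= trunc n X + C * surv opt P n X.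
  elim: n X => [|n IHn] X Xn.
    by rewrite /hitting_time_trunc big_geq //= (negbTE Xn) add0r mulr1.
  apply: le_trans (d_sub X Xn) _.
  rewrite hitting_time_truncS //= (negbTE Xn) -addrA lerD2l mulr_sumr -big_split /=.
  by apply: ler_sum => Y Yn; rewrite mulrCA -mulrDr ler_wpM2l ?IHn.
move=> X Xn; have := hitting_time_ge0 X.
case E : (ht X) => [r| |] // _; last exact: leey.
have trunc_r : trunc n X @[n --> \oo] --> r.
  by have := @cvg_hitting_time_trunc X; rewrite E; apply.
have surv0 : surv opt P n X @[n --> \oo] --> 0.
  by apply: cvg_series_cvg_0; apply/cvg_ex; exists r.
have bound_r : trunc n X + C * surv opt P n X @[n --> \oo] --> r.
  by rewrite -[r]addr0 -(mulr0 C); apply: cvgD => //; apply: cvgMl_tmp.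
rewrite lee_fin -(cvg_lim _ bound_r) //; apply: limr_ge; first exact: cvgP bound_r.
by apply: nearW => n; apply: d_le.
Qed.

End HittingTime.

Section AverageHittingTime.
Variables (R : realType) (S : finType) (opt : {set S}).

Lemma avg_hitting_time_le (P : S -> S -> R) (f : S -> R) :
  (forall X, (hitting_time opt P X <= (f X)%:E)%E) ->
  (avg_hitting_time opt P <= ((#|S|%:R)^-1 * \sum_X f X)%:E)%E.
Proof.
move=> ht_le; rewrite /avg_hitting_time EFinM -sumEFin.
by apply: lee_wpmul2l; [rewrite lee_fin invr_ge0 | apply: lee_sum].
Qed.

Lemma avg_hitting_time_ge (P : S -> S -> R) (f : S -> R) :
  (forall X, ((f X)%:E <= hitting_time opt P X)%E) ->
  (((#|S|%:R)^-1 * \sum_X f X)%:E <= avg_hitting_time opt P)%E.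
Proof.
move=> ht_ge; rewrite /avg_hitting_time EFinM -sumEFin.
by apply: lee_wpmul2l; [rewrite lee_fin invr_ge0 | apply: lee_sum].
Qed.

Lemma avg_hitting_time_fin (P : S -> S -> R) :
  (forall X, hitting_time opt P X \is a fin_num) ->
  avg_hitting_time opt P =
  ((#|S|%:R)^-1 * \sum_X fine (hitting_time opt P X))%:E.
Proof.
move=> ht_fin; rewrite /avg_hitting_time EFinM -sumEFin.
by congr (_ * _)%E; apply: eq_bigr => X _; rewrite fineK.
Qed.

End AverageHittingTime.

Lemma mixed_matrix_ge0 (R : realType) (S : finType) (q : S -> R)
    (P1 P2 : S -> S -> R) :
  (forall X, 0 <= q X <= 1) ->
  (forall X Y, 0 <= P1 X Y) -> (forall X Y, 0 <= P2 X Y) ->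
  forall X Y, 0 <= mixed_matrix q P1 P2 X Y.
Proof.
move=> q01 P1_ge0 P2_ge0 X Y; have /andP[q_ge0 q_le1] := q01 X.
by rewrite addr_ge0 ?mulr_ge0 ?subr_ge0.
Qed.

Lemma sum_mixed_matrix (R : realType) (S : finType) (A : pred S) (q : S -> R)
    (P1 P2 : S -> S -> R) (f : S -> R) X :
  \sum_(Y | A Y) mixed_matrix q P1 P2 X Y * f Y =
  q X * \sum_(Y | A Y) P1 X Y * f Y + (1 - q X) * \sum_(Y | A Y) P2 X Y * f Y.
Proof.
rewrite !mulr_sumr -big_split /=; apply: eq_bigr => Y _.
by rewrite /mixed_matrix mulrDl !mulrA.
Qed.

Section Complementary.
Variables (R : realType) (S : finType) (opt : {set S}) (P1 P2 : S -> S -> R).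
Hypotheses (P1_ge0 : forall X Y, 0 <= P1 X Y) (P2_ge0 : forall X Y, 0 <= P2 X Y).
Hypothesis P1_fin : forall X, hitting_time opt P1 X \is a fin_num.

Local Notation d X := (fine (hitting_time opt P1 X)).

Let d_ge0 X : 0 <= d X.
Proof. exact/fine_ge0/hitting_time_ge0. Qed.

Let d_first_step X : X \notin opt ->
  d X = 1 + \sum_(Y | Y \notin opt) P1 X Y * d Y.
Proof. exact: hitting_time_first_step. Qed.

Lemma Delta_self X : X \notin opt -> Delta opt P1 P1 X = 1.
Proof. by move=> Xn; rewrite /Delta {1}(d_first_step Xn) addrK. Qed.

Lemma complementary_mixed_lt : complementary opt P1 P2 ->
  exists q : S -> R, (forall X, 0 <= q X <= 1) /\
    (avg_hitting_time opt (mixed_matrix q P1 P2) < avg_hitting_time opt P1)%E.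
Proof.
move=> [X0 [X0n Delta_lt]]; rewrite Delta_self // in Delta_lt.
set del := Delta opt P1 P2 X0 - 1.
have del_gt0 : 0 < del by rewrite subr_gt0.
pose q X : R := (X != X0)%:R.
have q01 X : 0 <= q X <= 1 by rewrite /q; case: (X != X0); rewrite lexx ler01.
exists q; split => //; have M_ge0 := mixed_matrix_ge0 q01 P1_ge0 P2_ge0.
pose d' X := d X - (if X == X0 then del else 0).
have d'_ge0 X : 0 <= d' X.
  rewrite /d'; case: eqP => [->|_]; last by rewrite subr0.
  have : 0 <= \sum_(Y | Y \notin opt) P2 X0 Y * d Y.
    by apply: sumr_ge0 => Y _; rewrite mulr_ge0.
  rewrite /del /Delta; lra.
have d'_super X : X \notin opt ->
    1 + \sum_(Y | Y \notin opt) mixed_matrix q P1 P2 X Y * d' Y <= d' X.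
  move=> Xn; apply: (@le_trans _ _
      (1 + \sum_(Y | Y \notin opt) mixed_matrix q P1 P2 X Y * d Y)).
    rewrite lerD2l; apply: ler_sum => Y _.
    rewrite ler_wpM2l // /d' lerBlDr lerDl.
    by case: eqP => // _; apply: ltW.
  rewrite sum_mixed_matrix /q /d'; case: eqP => [->|_].
    by rewrite /del /Delta /= mul0r add0r subr0 mul1r; lra.
  by rewrite subrr mul0r addr0 mul1r subr0 -d_first_step.
have avg_le :=
  avg_hitting_time_le (hitting_time_le_supersolution M_ge0 d'_ge0 d'_super).
apply: (le_lt_trans avg_le); rewrite avg_hitting_time_fin // lte_fin.
rewrite ltr_pM2l ?invr_gt0 ?ltr0n; last by apply/card_gt0P; exists X0.
by rewrite /d' sumrB -big_mkcond big_pred1_eq ltrBlDr ltrDl.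
Qed.

Lemma not_complementary_mixed_ge : ~ complementary opt P1 P2 ->
  forall q : S -> R, (forall X, 0 <= q X <= 1) ->
  (avg_hitting_time opt P1 <= avg_hitting_time opt (mixed_matrix q P1 P2))%E.
Proof.
move=> not_compl q q01; have M_ge0 := mixed_matrix_ge0 q01 P1_ge0 P2_ge0.
have d_sub X : X \notin opt ->
    d X <= 1 + \sum_(Y | Y \notin opt) mixed_matrix q P1 P2 X Y * d Y.
  move=> Xn; have /andP[q_ge0 q_le1] := q01 X.
  have : Delta opt P1 P2 X <= 1.
    rewrite -(Delta_self Xn) leNgt; apply/negP => Delta_lt.
    by apply: not_compl; exists X.
  rewrite sum_mixed_matrix /Delta (d_first_step Xn).
  set A := \sum_(Y | Y \notin opt) P1 X Y * d Y.
  set B := \sum_(Y | Y \notin opt) P2 X Y * d Y.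
  move=> Delta_le; have : 0 <= (1 - q X) * (B - A) by rewrite mulr_ge0 // subr_ge0; lra.
  nra.
rewrite avg_hitting_time_fin //; apply: avg_hitting_time_ge => X.
have [Xo|Xn] := boolP (X \in opt).
  by rewrite (hitting_time_opt P1_ge0 Xo); apply: (hitting_time_ge0 _ M_ge0).
exact: (hitting_time_ge_subsolution M_ge0 d_ge0 d_sub Xn).
Qed.

End Complementary.

Theorem corollary6 (R : realType) (S : finType) (opt : {set S})
    (P1 P2 : S -> S -> R) :
  pure_strategy opt P1 -> pure_strategy opt P2 ->
  (forall X : S, hitting_time opt P1 X \is a fin_num) ->
  complementary opt P1 P2 <->
  (exists q : S -> R, (forall X, 0 <= q X <= 1) /\
     (avg_hitting_time opt (mixed_matrix q P1 P2) < avg_hitting_time opt P1)%E).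
Proof.
move=> [[P1_ge0 _] _] [[P2_ge0 _] _] P1_fin; split.
  exact: complementary_mixed_lt.
move=> [q [q01 avg_lt]]; apply: contrapT => not_compl.
by move: avg_lt; rewrite ltNge not_complementary_mixed_ge.
Qed.
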